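(* For every $r\in\left(0,\frac{\pi}{3}\right]$, the open $r$-thickening $B_r(\mathbb{S}^1,\mathbf{E}(\mathbb{S}^1))=\{f\in\mathbf{E}(\mathbb{S}^1):\exists\,\theta\in\mathbb{S}^1\text{ with }\|f-d_{\mathbb{S}^1}(\theta,\cdot)\|_\infty<r\}$ is homotopy equivalent to $\mathbb{S}^1$.
   Context: $\mathbb{S}^1=\mathbb{R}/2\pi$ with its geodesic metric $d_{\mathbb{S}^1}$ (diameter $\pi$). For a metric space $(X,d_X)$, $\Delta(X)=\{f:X\to\mathbb{R}\text{ bounded}: f(x)+f(x')\ge d_X(x,x')\ \forall x,x'\}$, and the tight span $\mathbf{E}(X)$ is the set of pointwise-minimal elements of $\Delta(X)$ with the sup-norm metric. $\mathbb{S}^1$ is regarded as a subspace of $\mathbf{E}(\mathbb{S}^1)$ via the Kuratowski embedding $\theta\mapsto d_{\mathbb{S}^1}(\theta,\cdot)$. *)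

From Stdlib Require Import Reals Lra.
Open Scope R_scope.

(* S^1 = R / 2pi, represented by the canonical representatives in [0, 2pi). *)
Definition S1 : Type := { x : R | 0 <= x < 2 * PI }.

(* Geodesic metric on R/2pi, written out on representatives in [0,2pi):
   d(x,y) = min(|x - y|, 2pi - |x - y|). Diameter pi. *)
Definition dS1 (x y : S1) : R :=
  Rmin (Rabs (proj1_sig x - proj1_sig y)) (2 * PI - Rabs (proj1_sig x - proj1_sig y)).

Definition bounded_fun (f : S1 -> R) : Prop :=
  exists M, forall x, Rabs (f x) <= M.

Definition in_Delta (f : S1 -> R) : Prop :=
  bounded_fun f /\ forall x x', f x + f x' >= dS1 x x'.

Definition in_tight_span (f : S1 -> R) : Prop :=
  in_Delta f /\
  forall g, in_Delta g -> (forall x, g x <= f x) -> forall x, g x = f x.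

Definition kur (theta : S1) : S1 -> R := fun x => dS1 theta x.

Definition supdist_lt (f g : S1 -> R) (r : R) : Prop :=
  exists s, s < r /\ forall x, Rabs (f x - g x) <= s.

Definition thickening (r : R) (f : S1 -> R) : Prop :=
  in_tight_span f /\ exists theta : S1, supdist_lt f (kur theta) r.

(* A "closeness" predicate: close x y e  means  d(x,y) < e. *)
Definition closeness (T : Type) := T -> T -> R -> Prop.

Definition close_S1 : closeness S1 := fun x y e => dS1 x y < e.
Definition close_fun : closeness (S1 -> R) := fun f g e => supdist_lt f g e.
Definition close_unit : closeness R := fun s t e => Rabs (s - t) < e.
(* max-metric on a product, inducing the product topology *)
Definition close_prod {T U} (cT : closeness T) (cU : closeness U)
  : closeness (T * U) :=
  fun p q e => cT (fst p) (fst q) e /\ cU (snd p) (snd q) e.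

Definition cont_between {T U} (cT : closeness T) (cU : closeness U)
  (A : T -> Prop) (B : U -> Prop) (F : T -> U) : Prop :=
  (forall x, A x -> B (F x)) /\
  forall x, A x -> forall eps, 0 < eps ->
    exists delta, 0 < delta /\
      forall y, A y -> cT x y delta -> cU (F x) (F y) eps.

Definition unit_interval (t : R) : Prop := 0 <= t <= 1.

Definition homotopy_equiv_S1 (A : (S1 -> R) -> Prop) : Prop :=
  exists (f : (S1 -> R) -> S1) (g : S1 -> (S1 -> R))
         (H : (S1 -> R) * R -> (S1 -> R)) (K : S1 * R -> S1),
    cont_between close_fun close_S1 A (fun _ => True) f /\
    cont_between close_S1 close_fun (fun _ => True) A g /\
    cont_between (close_prod close_fun close_unit) close_fun
      (fun p => A (fst p) /\ unit_interval (snd p)) A H /\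
    (forall h, A h -> forall x, H (h, 0) x = g (f h) x) /\
    (forall h, A h -> forall x, H (h, 1) x = h x) /\
    cont_between (close_prod close_S1 close_unit) close_S1
      (fun p => unit_interval (snd p)) (fun _ => True) K /\
    (forall x, K (x, 0) = f (g x)) /\
    (forall x, K (x, 1) = x).

From Stdlib Require Import Reals Lra Lia ProofIrrelevance ClassicalEpsilon Classical.
Open Scope R_scope.

(* Every h in the tight span of S^1 is 1-Lipschitz and satisfies h x + h (x + pi) = pi.
   Any three points of the sublevel set {h < r} are therefore pairwise at distance
   < 2r <= 2pi/3, so the signed offsets between them add up without wrap-around.
   For q with h q < r let lift h q be the supremum over x of offset(q, x) minus a
   penalty that vanishes at the infimum of h and exceeds 5 h x once h x >= r; points
   outside the sublevel set never approach this supremum, hence q + lift h q does not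
   depend on q modulo 2pi.  This defines a retraction of the thickening onto S^1; it is
   continuous because the penalty is Lipschitz in h, and it sends d(theta, .) to theta.
   The straight-line homotopy from d(retract h, .) to h stays in the thickening because
   some x0 has h x0 < r and d(retract h, x0) + h x0 < 2r. *)

Ltac split_Rabs_Rmin :=
  unfold Rmin, Rabs in *; repeat destruct (Rle_dec _ _); repeat destruct (Rcase_abs _).

Lemma S1_range (x : S1) : 0 <= proj1_sig x < 2 * PI.
Proof. exact (proj2_sig x). Qed.

Lemma S1_val_inj (x y : S1) : proj1_sig x = proj1_sig y -> x = y.
Proof. destruct x as [x hx], y as [y hy]; simpl; intros ->; f_equal; apply proof_irrelevance. Qed.

Lemma dS1_ge0 x y : 0 <= dS1 x y.
Proof. pose proof (S1_range x); pose proof (S1_range y); unfold dS1; split_Rabs_Rmin; lra. Qed.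

Lemma dS1_sym x y : dS1 x y = dS1 y x.
Proof. pose proof (S1_range x); pose proof (S1_range y); unfold dS1; split_Rabs_Rmin; lra. Qed.

Lemma dS1_refl x : dS1 x x = 0.
Proof. pose proof (S1_range x); pose proof PI_RGT_0; unfold dS1; split_Rabs_Rmin; lra. Qed.

Lemma dS1_le_PI x y : dS1 x y <= PI.
Proof. pose proof (S1_range x); pose proof (S1_range y); unfold dS1; split_Rabs_Rmin; lra. Qed.

Lemma dS1_triangle x y z : dS1 x z <= dS1 x y + dS1 y z.
Proof.
  pose proof (S1_range x); pose proof (S1_range y); pose proof (S1_range z).
  unfold dS1; split_Rabs_Rmin; lra.
Qed.

Lemma two_PI_multiple_small k : Rabs (2 * PI * IZR k) < 2 * PI -> k = 0%Z.
Proof.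
  intro H. pose proof PI_RGT_0.
  assert (Hk : -1 < IZR k < 1) by (split_Rabs_Rmin; split; nra).
  destruct Hk as [H1 H2]. apply lt_IZR in H1, H2. lia.
Qed.

Lemma eq_mod_2PI a b k : 0 <= a < 2 * PI -> 0 <= b < 2 * PI ->
  a = b + 2 * PI * IZR k -> a = b.
Proof.
  intros Ha Hb E. assert (k = 0%Z) as ->; [|simpl in E; lra].
  apply two_PI_multiple_small. replace (2 * PI * IZR k) with (a - b) by lra. split_Rabs_Rmin; lra.
Qed.

Lemma wrap_subproof y : 0 <= 2 * PI * frac_part (y / (2 * PI)) < 2 * PI.
Proof. pose proof PI_RGT_0; pose proof (base_fp (y / (2 * PI))); nra. Qed.

Definition wrap (y : R) : S1 := exist _ _ (wrap_subproof y).

Lemma wrap_cong y : exists k, proj1_sig (wrap y) = y + 2 * PI * IZR k.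
Proof.
  pose proof PI_RGT_0. exists (- Int_part (y / (2 * PI)))%Z.
  simpl; unfold frac_part; rewrite opp_IZR; field; lra.
Qed.

Lemma wrap_periodic y k : wrap (y + 2 * PI * IZR k) = wrap y.
Proof.
  apply S1_val_inj. destruct (wrap_cong (y + 2 * PI * IZR k)) as [k1 e1].
  destruct (wrap_cong y) as [k2 e2].
  apply (eq_mod_2PI _ _ (k1 + k - k2) (S1_range _) (S1_range _)).
  rewrite e1, e2, !minus_IZR, !plus_IZR; ring.
Qed.

Lemma wrap_val x : wrap (proj1_sig x) = x.
Proof.
  apply S1_val_inj. destruct (wrap_cong (proj1_sig x)) as [k e].
  exact (eq_mod_2PI _ _ k (S1_range _) (S1_range x) e).
Qed.

Lemma dS1_wrap_le a b : dS1 (wrap a) (wrap b) <= Rabs (a - b).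
Proof.
  destruct (wrap_cong a) as [k ek], (wrap_cong b) as [l el].
  pose proof (S1_range (wrap a)); pose proof (S1_range (wrap b)); pose proof PI_RGT_0.
  unfold dS1. rewrite ek, el in *.
  destruct (Z.lt_trichotomy k l) as [c|[c|c]].
  - assert (IZR k - IZR l <= -1) by (rewrite <- minus_IZR; apply IZR_le; lia).
    assert (2 * PI * (IZR k - IZR l) <= 2 * PI * -1) by (apply Rmult_le_compat_l; lra).
    split_Rabs_Rmin; lra.
  - subst l. split_Rabs_Rmin; lra.
  - assert (1 <= IZR k - IZR l) by (rewrite <- minus_IZR; apply IZR_le; lia).
    assert (2 * PI * 1 <= 2 * PI * (IZR k - IZR l)) by (apply Rmult_le_compat_l; lra).
    split_Rabs_Rmin; lra.
Qed.

Definition antipode (x : S1) : S1 := wrap (proj1_sig x + PI).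

Lemma antipode_val x :
  proj1_sig (antipode x) = proj1_sig x + PI /\ proj1_sig x < PI \/
  proj1_sig (antipode x) = proj1_sig x - PI /\ PI <= proj1_sig x.
Proof.
  pose proof (S1_range x); pose proof PI_RGT_0.
  destruct (wrap_cong (proj1_sig x + PI)) as [k e].
  destruct (Rlt_le_dec (proj1_sig x) PI) as [c|c]; [left|right]; split; try exact c.
  - apply (eq_mod_2PI _ _ k (S1_range _)); [lra|exact e].
  - apply (eq_mod_2PI _ _ (k + 1) (S1_range _)); [lra|].
    unfold antipode. rewrite e, plus_IZR; simpl; ring.
Qed.

Lemma dS1_antipode_sum x y : dS1 x y + dS1 y (antipode x) = PI.
Proof.
  pose proof (S1_range x); pose proof (S1_range y); pose proof PI_RGT_0.
  destruct (antipode_val x) as [[e h]|[e h]]; unfold dS1; rewrite e; split_Rabs_Rmin; lra.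
Qed.

Lemma dS1_antipode x : dS1 x (antipode x) = PI.
Proof. pose proof (dS1_antipode_sum x x) as H; rewrite dS1_refl in H; lra. Qed.

Definition offset (q x : S1) : R :=
  let d := proj1_sig x - proj1_sig q in
  if Rlt_dec PI d then d - 2 * PI else if Rle_dec d (- PI) then d + 2 * PI else d.

Lemma offset_range q x : - PI < offset q x <= PI.
Proof.
  pose proof (S1_range x); pose proof (S1_range q); unfold offset.
  destruct (Rlt_dec _ _); [|destruct (Rle_dec _ _)]; lra.
Qed.

Lemma Rabs_offset q x : Rabs (offset q x) = dS1 q x.
Proof.
  pose proof (S1_range x); pose proof (S1_range q); pose proof PI_RGT_0; unfold offset, dS1.
  destruct (Rlt_dec _ _); [|destruct (Rle_dec _ _)]; split_Rabs_Rmin; lra.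
Qed.

Lemma offset_cong q x : exists k, offset q x = proj1_sig x - proj1_sig q + 2 * PI * IZR k.
Proof.
  unfold offset; destruct (Rlt_dec _ _);
    [exists (-1)%Z | destruct (Rle_dec _ _); [exists 1%Z | exists 0%Z]]; simpl; lra.
Qed.

Lemma offset_self q : offset q q = 0.
Proof.
  pose proof PI_RGT_0; unfold offset.
  destruct (Rlt_dec _ _); [|destruct (Rle_dec _ _)]; lra.
Qed.

Lemma offset_le q x : - dS1 q x <= offset q x <= dS1 q x.
Proof. rewrite <- Rabs_offset; split_Rabs_Rmin; lra. Qed.

Lemma offset_add q q' x : dS1 q q' + dS1 q' x + dS1 q x < 2 * PI ->
  offset q x = offset q q' + offset q' x.
Proof.
  intro Hd.
  destruct (offset_cong q x) as [k1 e1], (offset_cong q q') as [k2 e2],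
    (offset_cong q' x) as [k3 e3].
  assert (K : (k1 - k2 - k3 = 0)%Z).
  { apply two_PI_multiple_small. rewrite !minus_IZR.
    replace (2 * PI * (IZR k1 - IZR k2 - IZR k3)) with (offset q x - offset q q' - offset q' x)
      by (rewrite e1, e2, e3; ring).
    pose proof (offset_le q x); pose proof (offset_le q q'); pose proof (offset_le q' x).
    split_Rabs_Rmin; lra. }
  assert (IZR k1 = IZR k2 + IZR k3) as K2 by (rewrite <- plus_IZR; f_equal; lia).
  rewrite e1, e2, e3, K2; ring.
Qed.

Lemma wrap_offset q x : wrap (proj1_sig q + offset q x) = x.
Proof.
  destruct (offset_cong q x) as [k e]. rewrite e.
  replace (proj1_sig q + (proj1_sig x - proj1_sig q + 2 * PI * IZR k))
    with (proj1_sig x + 2 * PI * IZR k) by ring.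
  rewrite wrap_periodic; apply wrap_val.
Qed.

Lemma dS1_wrap_offset_le q a x : dS1 (wrap (proj1_sig q + a)) x <= Rabs (a - offset q x).
Proof.
  rewrite <- (wrap_offset q x) at 1. eapply Rle_trans; [apply dS1_wrap_le|].
  right; f_equal; ring.
Qed.

Section Extrema.
Context {T : Type}.

Definition is_sup (F : T -> R) (s : R) : Prop :=
  (forall x, F x <= s) /\ (forall e, 0 < e -> exists x, s - e < F x).

Definition is_inf (F : T -> R) (m : R) : Prop := is_sup (fun x => - F x) (- m).

Lemma is_sup_le F s B : is_sup F s -> (forall x, F x <= B) -> s <= B.
Proof.
  intros [_ Happrox] HB. apply Rnot_lt_le; intro C.
  destruct (Happrox (s - B)) as [x Hx]; [lra|]. specialize (HB x); lra.
Qed.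

Lemma is_sup_dist F G s1 s2 e : is_sup F s1 -> is_sup G s2 ->
  (forall x, Rabs (F x - G x) <= e) -> Rabs (s1 - s2) <= e.
Proof.
  intros HF HG H. apply Rabs_le; split.
  - enough (s2 <= s1 + e) by lra. apply (is_sup_le _ _ _ HG); intro x.
    pose proof (proj1 HF x); specialize (H x); split_Rabs_Rmin; lra.
  - enough (s1 <= s2 + e) by lra. apply (is_sup_le _ _ _ HF); intro x.
    pose proof (proj1 HG x); specialize (H x); split_Rabs_Rmin; lra.
Qed.

Lemma is_inf_ge F m B : is_inf F m -> (forall x, B <= F x) -> B <= m.
Proof.
  intros HF HB. enough (- m <= - B) by lra.
  apply (is_sup_le _ _ _ HF); intro x; specialize (HB x); lra.
Qed.

Lemma is_inf_lb F m x : is_inf F m -> m <= F x.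
Proof. intros [H _]; specialize (H x); lra. Qed.

Lemma is_inf_approx F m e : is_inf F m -> 0 < e -> exists x, F x < m + e.
Proof. intros [_ H] He; destruct (H e He) as [x Hx]; exists x; lra. Qed.

Lemma is_inf_dist F G m1 m2 e : is_inf F m1 -> is_inf G m2 ->
  (forall x, Rabs (F x - G x) <= e) -> Rabs (m1 - m2) <= e.
Proof.
  intros HF HG H. rewrite <- Rabs_Ropp.
  replace (- (m1 - m2)) with (- m1 - - m2) by ring.
  apply (is_sup_dist _ _ _ _ _ HF HG); intro x.
  replace (- F x - - G x) with (- (F x - G x)) by ring. rewrite Rabs_Ropp; apply H.
Qed.

Definition sup_fun (F : T -> R) : R := epsilon (inhabits 0) (is_sup F).

Definition inf_fun (F : T -> R) : R := - sup_fun (fun x => - F x).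

Lemma sup_fun_spec (x0 : T) F B : (forall x, F x <= B) -> is_sup F (sup_fun F).
Proof.
  intro HB. unfold sup_fun; apply epsilon_spec.
  destruct (completeness (fun y => exists x, y = F x)) as [s [Hub Hleast]].
  - exists B; intros y [x ->]; apply HB.
  - exists (F x0), x0; reflexivity.
  - exists s; split.
    + intro x; apply Hub; exists x; reflexivity.
    + intros e He. apply NNPP; intro C.
      enough (s <= s - e) by lra. apply Hleast; intros y [x ->].
      apply Rnot_lt_le; intro C2; apply C; exists x; exact C2.
Qed.

Lemma inf_fun_spec (x0 : T) F B : (forall x, B <= F x) -> is_inf F (inf_fun F).
Proof.
  intro HB. unfold is_inf, inf_fun; rewrite Ropp_involutive.
  apply (sup_fun_spec x0 _ (- B)); intro x; specialize (HB x); lra.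
Qed.

End Extrema.

Lemma Delta_dist f x y : in_Delta f -> dS1 x y <= f x + f y.
Proof. intros [_ H]; specialize (H x y); lra. Qed.

Lemma Delta_ge0 f x : in_Delta f -> 0 <= f x.
Proof. intro H; pose proof (Delta_dist f x x H); rewrite dS1_refl in *; lra. Qed.

Lemma tight_span_approx h x eps : in_tight_span h -> 0 < eps ->
  exists y, h x < dS1 x y - h y + eps.
Proof.
  intros [[[M HM] HD] Hmin] He. apply NNPP; intro Hn.
  (* Otherwise lowering h at x by eps/2 stays in Delta, contradicting minimality. *)
  assert (Hall : forall y, dS1 x y - h y + eps <= h x).
  { intro y; apply Rnot_lt_le; intro C; apply Hn; exists y; exact C. }
  assert (Hx : eps <= 2 * h x) by (specialize (Hall x); rewrite dS1_refl in Hall; lra).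
  set (g z := if excluded_middle_informative (z = x) then h x - eps / 2 else h z).
  assert (Hcase : forall z, (z = x /\ g z = h x - eps / 2) \/ (z <> x /\ g z = h z)).
  { intro z; unfold g; destruct (excluded_middle_informative (z = x)); auto. }
  assert (Hg : in_Delta g).
  { split.
    - exists (M + eps); intro z; pose proof (HM z); pose proof (HM x).
      destruct (Hcase z) as [[-> ->]|[_ ->]]; split_Rabs_Rmin; lra.
    - intros z z'.
      destruct (Hcase z) as [[-> ->]|[_ ->]], (Hcase z') as [[-> ->]|[_ ->]].
      + rewrite dS1_refl; lra.
      + specialize (Hall z'); lra.
      + specialize (Hall z); rewrite dS1_sym in Hall; lra.
      + apply HD. }
  assert (Hle : forall z, g z <= h z) by (intro z; destruct (Hcase z) as [[-> ->]|[_ ->]]; lra).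
  specialize (Hmin g Hg Hle x). destruct (Hcase x) as [[_ Hgx]|[n _]]; [lra|now contradict n].
Qed.

Lemma tight_span_lipschitz h a b : in_tight_span h -> h a - h b <= dS1 a b.
Proof.
  intro HE. apply Rnot_lt_le; intro C.
  destruct (tight_span_approx h a (h a - h b - dS1 a b) HE) as [y Hy]; [lra|].
  pose proof (Delta_dist h b y (proj1 HE)); pose proof (dS1_triangle a b y); lra.
Qed.

Lemma tight_span_antipode h x : in_tight_span h -> h x + h (antipode x) = PI.
Proof.
  intro HE. apply Rle_antisym.
  - apply Rnot_lt_le; intro C.
    destruct (tight_span_approx h x (h x + h (antipode x) - PI) HE) as [y Hy]; [lra|].
    pose proof (tight_span_lipschitz h (antipode x) y HE); pose proof (dS1_antipode_sum x y).
    rewrite (dS1_sym (antipode x) y) in *; lra.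
  - pose proof (Delta_dist h x (antipode x) (proj1 HE)); rewrite dS1_antipode in *; lra.
Qed.

Lemma tight_span_bounds h x : in_tight_span h -> 0 <= h x <= PI.
Proof.
  intro HE. pose proof (tight_span_antipode h x HE).
  pose proof (Delta_ge0 h x (proj1 HE)); pose proof (Delta_ge0 h (antipode x) (proj1 HE)); lra.
Qed.

Lemma tight_span_of_antipode_le f : in_Delta f ->
  (forall x, f x + f (antipode x) <= PI) -> in_tight_span f.
Proof.
  intros HD HA. split; [exact HD|].
  intros g Hg Hle x. apply Rle_antisym; [apply Hle|].
  pose proof (Delta_dist g x (antipode x) Hg); rewrite dS1_antipode in *.
  specialize (Hle (antipode x)); specialize (HA x); lra.
Qed.

Lemma tight_span_convex f g t : in_tight_span f -> in_tight_span g -> 0 <= t <= 1 ->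
  in_tight_span (fun x => (1 - t) * f x + t * g x).
Proof.
  intros Hf Hg Ht. apply tight_span_of_antipode_le.
  - split.
    + exists PI; intro x.
      pose proof (tight_span_bounds f x Hf); pose proof (tight_span_bounds g x Hg).
      rewrite Rabs_pos_eq by nra; nra.
    + intros x x'.
      pose proof (Delta_dist f x x' (proj1 Hf)); pose proof (Delta_dist g x x' (proj1 Hg)); nra.
  - intro x. pose proof (tight_span_antipode f x Hf); pose proof (tight_span_antipode g x Hg). nra.
Qed.

Lemma kur_tight_span t : in_tight_span (kur t).
Proof.
  unfold kur. apply tight_span_of_antipode_le.
  - split.
    + exists PI; intro x. pose proof (dS1_ge0 t x); pose proof (dS1_le_PI t x).
      rewrite Rabs_pos_eq; lra.
    + intros x x'. pose proof (dS1_triangle x t x'). rewrite (dS1_sym x t) in *; lra.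
  - intro x. pose proof (dS1_antipode_sum x t). rewrite (dS1_sym x t) in *; lra.
Qed.

Lemma kur_dist a b x : Rabs (kur a x - kur b x) <= dS1 a b.
Proof.
  unfold kur. pose proof (dS1_triangle a b x); pose proof (dS1_triangle b a x).
  rewrite (dS1_sym b a) in *. split_Rabs_Rmin; lra.
Qed.

Lemma thickeningP r h : thickening r h <-> in_tight_span h /\ exists t, h t < r.
Proof.
  split.
  - intros [HE [t [s [Hs Hb]]]]. split; [exact HE|]. exists t.
    specialize (Hb t). unfold kur in Hb; rewrite dS1_refl in Hb. split_Rabs_Rmin; lra.
  - intros [HE [t Ht]]. split; [exact HE|]. exists t, (h t); split; [exact Ht|].
    intro x. unfold kur. pose proof (tight_span_lipschitz h x t HE).
    pose proof (Delta_dist h t x (proj1 HE)). rewrite (dS1_sym x t) in *. split_Rabs_Rmin; lra.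
Qed.

Lemma tight_span_is_inf h : in_tight_span h -> is_inf h (inf_fun h).
Proof. intro HE; apply (inf_fun_spec (wrap 0) _ 0); intro x; apply (tight_span_bounds h x HE). Qed.

Lemma convex_comb_dist a b a' b' t t' : 0 <= t <= 1 ->
  Rabs ((1 - t) * a + t * b - ((1 - t') * a' + t' * b')) <=
  Rabs (a - a') + Rabs (b - b') + Rabs (t - t') * Rabs (b' - a').
Proof.
  intro Ht.
  replace ((1 - t) * a + t * b - ((1 - t') * a' + t' * b'))
    with ((1 - t) * (a - a') + t * (b - b') + (t - t') * (b' - a')) by ring.
  eapply Rle_trans; [apply Rabs_triang|].
  eapply Rle_trans; [apply Rplus_le_compat_r, Rabs_triang|].
  rewrite !Rabs_mult, (Rabs_pos_eq (1 - t)), (Rabs_pos_eq t) by lra.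
  pose proof (Rabs_pos (a - a')); pose proof (Rabs_pos (b - b')); nra.
Qed.

Lemma Rlt_min3 x a b c : x < Rmin a (Rmin b c) -> x < a /\ x < b /\ x < c.
Proof. split_Rabs_Rmin; lra. Qed.

Section Retraction.
Variable r : R.
Hypothesis r_pos : 0 < r.
Hypothesis r_le_PI3 : r <= PI / 3.

(* Normalised by r - m so that it is below r/2 near the infimum m of h but at least 5v
   where v >= r; the latter makes points outside {h < r} irrelevant to the supremum
   defining lift. *)
Definition penalty (m v : R) : R := 5 * r * (v - m) / (r - m).

Definition penalty_modulus (m : R) : R := 10 * r * (PI + 2 * (r - m)) / ((r - m) * (r - m)).

Lemma penalty_mul m v : m < r -> penalty m v * (r - m) = 5 * r * (v - m).
Proof. intro; unfold penalty; field; lra. Qed.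

Lemma penalty_ge0 m v : m < r -> m <= v -> 0 <= penalty m v.
Proof. intros Hm Hv; pose proof (penalty_mul m v Hm); nra. Qed.

Lemma penalty_ge m v : 0 <= m < r -> r <= v -> 5 * v <= penalty m v.
Proof. intros Hm Hv; pose proof (penalty_mul m v (proj2 Hm)); nra. Qed.

Lemma penalty_lt_half m v : 0 <= m < r -> v < m + (r - m) / 10 -> penalty m v < r / 2.
Proof. intros Hm Hv; pose proof (penalty_mul m v (proj2 Hm)); nra. Qed.

Lemma penalty_0 v : penalty 0 v = 5 * v.
Proof. unfold penalty; field; lra. Qed.

Lemma penalty_dist m m' v v' s : 0 <= m < r -> Rabs (m - m') <= s -> s <= (r - m) / 2 ->
  0 <= v <= PI -> Rabs (v - v') <= s ->
  Rabs (penalty m v - penalty m' v') <= penalty_modulus m * s.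
Proof.
  intros Hm Hmm' Hs Hv Hvv'.
  set (a := r - m) in *. set (a' := r - m'). set (u := v - m). set (u' := v' - m').
  assert (Ha : 0 < a) by (unfold a; lra).
  assert (Haa' : Rabs (a' - a) <= s) by (unfold a, a'; split_Rabs_Rmin; lra).
  assert (Ha' : a / 2 <= a') by (split_Rabs_Rmin; lra).
  assert (Hu : Rabs u <= PI) by (pose proof PI_RGT_0; unfold u; split_Rabs_Rmin; lra).
  assert (Huu' : Rabs (u - u') <= 2 * s) by (unfold u, u'; split_Rabs_Rmin; lra).
  assert (Hprod : (penalty m v - penalty m' v') * (a * a') = 5 * r * (u * (a' - a) + a * (u - u')))
    by (unfold penalty, a, a', u, u'; field; unfold a, a' in *; lra).
  assert (Hnum : Rabs (u * (a' - a) + a * (u - u')) <= (PI + 2 * a) * s).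
  { eapply Rle_trans; [apply Rabs_triang|]. rewrite !Rabs_mult, (Rabs_pos_eq a) by lra.
    pose proof (Rabs_pos u); pose proof (Rabs_pos (a' - a)); nra. }
  assert (Hbound : Rabs (penalty m v - penalty m' v') * (a * a / 2) <= 5 * r * (PI + 2 * a) * s).
  { pose proof (Rabs_pos (penalty m v - penalty m' v')).
    apply Rle_trans with (Rabs (penalty m v - penalty m' v') * (a * a')).
    { apply Rmult_le_compat_l; nra. }
    rewrite <- (Rabs_pos_eq (a * a')) by nra. rewrite <- Rabs_mult, Hprod, Rabs_mult.
    rewrite (Rabs_pos_eq (5 * r)) by lra. nra. }
  apply Rmult_le_reg_r with (a * a / 2); [nra|].
  unfold penalty_modulus; fold a.
  replace (10 * r * (PI + 2 * a) / (a * a) * s * (a * a / 2)) with (5 * r * (PI + 2 * a) * s)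
    by (field; lra).
  exact Hbound.
Qed.

Definition score (h : S1 -> R) (q x : S1) : R := offset q x - penalty (inf_fun h) (h x).

Definition lift (h : S1 -> R) (q : S1) : R := sup_fun (score h q).

(* Satisfiable: by lift_shift, q + lift h q does not depend on q modulo 2pi. *)
Definition retract (h : S1 -> R) : S1 :=
  epsilon (inhabits (wrap 0)) (fun y => forall q, h q < r -> y = wrap (proj1_sig q + lift h q)).

Section OneFunction.
Variable h : S1 -> R.
Hypothesis Hh : thickening r h.

Let Hspan : in_tight_span h := proj1 Hh.

Lemma inf_thickening : 0 <= inf_fun h < r.
Proof.
  pose proof (proj1 (thickeningP r h) Hh) as [_ [t Ht]].
  pose proof (tight_span_is_inf h Hspan) as Hinf. split.
  - apply (is_inf_ge _ _ _ Hinf); intro x; apply (tight_span_bounds h x Hspan).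
  - pose proof (is_inf_lb _ _ t Hinf); lra.
Qed.

Lemma exists_near_inf : exists t, h t < inf_fun h + (r - inf_fun h) / 10.
Proof. apply (is_inf_approx _ _ _ (tight_span_is_inf h Hspan)); pose proof inf_thickening; lra. Qed.

Lemma penalty_ge0_at x : 0 <= penalty (inf_fun h) (h x).
Proof.
  apply penalty_ge0; [apply inf_thickening|].
  exact (is_inf_lb _ _ x (tight_span_is_inf h Hspan)).
Qed.

Lemma lift_spec q : is_sup (score h q) (lift h q).
Proof.
  apply (sup_fun_spec (wrap 0) _ PI); intro x; unfold score.
  pose proof (offset_range q x); pose proof (penalty_ge0_at x); lra.
Qed.

Lemma score_far_dominated q x : h q < r -> r <= h x ->
  exists t, h t < r /\ score h q x < score h q t.
Proof.
  intros Hq Hx. destruct exists_near_inf as [t Ht].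
  pose proof inf_thickening as Hm.
  exists t; split; [lra|]. unfold score.
  pose proof (penalty_ge _ _ Hm Hx); pose proof (penalty_lt_half _ _ Hm Ht).
  pose proof (offset_le q x); pose proof (offset_le q t).
  pose proof (Delta_dist h q x (proj1 Hspan)); pose proof (Delta_dist h q t (proj1 Hspan)); lra.
Qed.

Lemma score_shift q q' x : h q < r -> h q' < r -> h x < r ->
  score h q x = offset q q' + score h q' x.
Proof.
  intros Hq Hq' Hx. unfold score. rewrite (offset_add q q' x); [ring|].
  pose proof (Delta_dist h q q' (proj1 Hspan)); pose proof (Delta_dist h q' x (proj1 Hspan)).
  pose proof (Delta_dist h q x (proj1 Hspan)); lra.
Qed.

Lemma lift_le_of_sublevel q B : h q < r ->
  (forall x, h x < r -> score h q x <= B) -> lift h q <= B.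
Proof.
  intros Hq HB. apply (is_sup_le _ _ _ (lift_spec q)); intro x.
  destruct (Rlt_le_dec (h x) r) as [Hx|Hx]; [exact (HB x Hx)|].
  destruct (score_far_dominated q x Hq Hx) as [t [Ht Hlt]]. specialize (HB t Ht); lra.
Qed.

Lemma lift_shift q q' : h q < r -> h q' < r -> lift h q = offset q q' + lift h q'.
Proof.
  intros Hq Hq'. apply Rle_antisym.
  - apply (lift_le_of_sublevel q _ Hq); intros x Hx.
    rewrite (score_shift q q' x Hq Hq' Hx). pose proof (proj1 (lift_spec q') x); lra.
  - enough (lift h q' <= lift h q - offset q q') by lra.
    apply (lift_le_of_sublevel q' _ Hq'); intros x Hx.
    pose proof (score_shift q q' x Hq Hq' Hx); pose proof (proj1 (lift_spec q) x); lra.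
Qed.

Lemma retract_spec q : h q < r -> retract h = wrap (proj1_sig q + lift h q).
Proof.
  intro Hq. unfold retract.
  refine (epsilon_spec (inhabits (wrap 0))
    (fun y => forall q, h q < r -> y = wrap (proj1_sig q + lift h q)) _ q Hq).
  exists (wrap (proj1_sig q + lift h q)); intros q' Hq'.
  rewrite (lift_shift q q' Hq Hq'). destruct (offset_cong q q') as [k e]; rewrite e.
  replace (proj1_sig q + (proj1_sig q' - proj1_sig q + 2 * PI * IZR k + lift h q'))
    with ((proj1_sig q' + lift h q') + 2 * PI * IZR k) by ring.
  apply wrap_periodic.
Qed.

Lemma retract_close_sublevel : exists x0, h x0 < r /\ dS1 (retract h) x0 + h x0 < 2 * r.
Proof.
  pose proof inf_thickening as Hm. destruct exists_near_inf as [t Ht].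
  assert (Htr : h t < r) by lra.
  rewrite (retract_spec t Htr). pose proof (lift_spec t) as [Hub Happrox].
  set (L := lift h t) in *.
  assert (HL : - (r / 2) < L).
  { pose proof (Hub t); unfold score in *; rewrite offset_self in *.
    pose proof (penalty_lt_half _ _ Hm Ht); lra. }
  destruct (Rlt_le_dec (Rabs L) (2 * r - h t)) as [C|C].
  - exists t; split; [exact Htr|].
    pose proof (dS1_wrap_offset_le t L t); rewrite offset_self, Rminus_0_r in *; lra.
  - destruct (Happrox (r / 2)) as [x Hx]; [lra|]. unfold score in Hx.
    pose proof (Hub x); unfold score in *.
    pose proof (penalty_ge0_at x); pose proof (offset_le t x).
    pose proof (Delta_dist h t x (proj1 Hspan)).
    assert (Hxr : h x < r).
    { apply Rnot_le_lt; intro C2. pose proof (penalty_ge _ _ Hm C2). split_Rabs_Rmin; lra. }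
    exists x; split; [exact Hxr|].
    pose proof (dS1_wrap_offset_le t L x). split_Rabs_Rmin; lra.
Qed.

End OneFunction.

Lemma kur_thickening t : thickening r (kur t).
Proof.
  apply thickeningP; split; [apply kur_tight_span|].
  exists t; unfold kur; rewrite dS1_refl; lra.
Qed.

Lemma retract_kur t : retract (kur t) = t.
Proof.
  pose proof (kur_thickening t) as Hk.
  assert (Ht : kur t t = 0) by apply dS1_refl.
  assert (Hm : inf_fun (kur t) = 0).
  { pose proof (inf_thickening _ Hk).
    pose proof (is_inf_lb _ _ t (tight_span_is_inf _ (kur_tight_span t))); lra. }
  assert (HL : lift (kur t) t = 0).
  { apply Rle_antisym.
    - apply (is_sup_le _ _ _ (lift_spec _ Hk t)); intro x; unfold score.
      rewrite Hm, penalty_0. pose proof (offset_le t x); unfold kur; pose proof (dS1_ge0 t x); lra.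
    - pose proof (proj1 (lift_spec _ Hk t) t); unfold score in *.
      rewrite Hm, penalty_0, Ht, offset_self in *; lra. }
  rewrite (retract_spec _ Hk t) by lra. rewrite HL, Rplus_0_r; apply wrap_val.
Qed.

Lemma lift_dist h h' q s : thickening r h -> thickening r h' ->
  (forall x, Rabs (h x - h' x) <= s) -> s <= (r - inf_fun h) / 2 ->
  Rabs (lift h q - lift h' q) <= penalty_modulus (inf_fun h) * s.
Proof.
  intros Hh Hh' Hs Hsm.
  apply (is_sup_dist _ _ _ _ _ (lift_spec h Hh q) (lift_spec h' Hh' q)); intro x; unfold score.
  replace (offset q x - penalty (inf_fun h) (h x) - (offset q x - penalty (inf_fun h') (h' x)))
    with (- (penalty (inf_fun h) (h x) - penalty (inf_fun h') (h' x))) by ring.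
  rewrite Rabs_Ropp.
  apply penalty_dist; [exact (inf_thickening h Hh) | | exact Hsm |
    exact (tight_span_bounds h x (proj1 Hh)) | exact (Hs x)].
  exact (is_inf_dist _ _ _ _ _ (tight_span_is_inf h (proj1 Hh)) (tight_span_is_inf h' (proj1 Hh'))
    Hs).
Qed.

Lemma retract_cont : cont_between close_fun close_S1 (thickening r) (fun _ => True) retract.
Proof.
  split; [easy|]. intros h Hh eps Heps.
  destruct (proj1 (thickeningP r h) Hh) as [HE [t Ht]].
  pose proof (inf_thickening h Hh) as Hm.
  set (K := penalty_modulus (inf_fun h)).
  assert (HK : 0 < K).
  { unfold K, penalty_modulus. pose proof PI_RGT_0.
    apply Rdiv_lt_0_compat; [nra|]. apply Rmult_lt_0_compat; lra. }
  exists (Rmin (r - h t) (Rmin ((r - inf_fun h) / 2) (eps / K))); split.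
  { apply Rmin_pos; [lra|]. apply Rmin_pos; [lra|]. apply Rdiv_lt_0_compat; lra. }
  intros h' Hh' [s [Hs Hb]]. apply Rlt_min3 in Hs as (Hs1 & Hs2 & Hs3).
  assert (Ht' : h' t < r) by (specialize (Hb t); split_Rabs_Rmin; lra).
  rewrite (retract_spec h Hh t Ht), (retract_spec h' Hh' t Ht').
  eapply Rle_lt_trans; [apply dS1_wrap_le|].
  replace (proj1_sig t + lift h t - (proj1_sig t + lift h' t)) with (lift h t - lift h' t) by ring.
  eapply Rle_lt_trans; [apply (lift_dist h h' t s Hh Hh' Hb); lra|].
  replace eps with (K * (eps / K)) by (field; lra).
  apply Rmult_lt_compat_l; lra.
Qed.

Lemma kur_cont : cont_between close_S1 close_fun (fun _ => True) (thickening r) kur.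
Proof.
  split; [intros t _; apply kur_thickening|].
  intros x _ eps Heps; exists eps; split; [exact Heps|].
  intros y _ Hxy; exists (dS1 x y); split; [exact Hxy|]. intro z; apply kur_dist.
Qed.

Definition straight_homotopy (p : (S1 -> R) * R) : S1 -> R :=
  fun x => (1 - snd p) * kur (retract (fst p)) x + snd p * fst p x.

Lemma straight_homotopy_thickening h t : thickening r h -> 0 <= t <= 1 ->
  thickening r (straight_homotopy (h, t)).
Proof.
  intros Hh Ht. pose proof (proj1 Hh) as HE.
  apply thickeningP; split.
  { exact (tight_span_convex _ _ t (kur_tight_span _) HE Ht). }
  unfold straight_homotopy, kur; simpl.
  destruct (retract_close_sublevel h Hh) as [x0 [H1 H2]].
  set (phi := retract h) in *. set (d := dS1 phi x0) in *.
  pose proof (dS1_ge0 phi x0); pose proof (tight_span_lipschitz h phi x0 HE).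
  pose proof (Delta_ge0 h x0 (proj1 HE)). fold d in H, H0.
  destruct (Rlt_le_dec (t * (d + h x0)) r) as [C|C].
  - exists phi. rewrite dS1_refl. nra.
  - exists x0. fold d. destruct (Rle_lt_dec d (h x0)) as [D|D]; [nra|].
    assert (r * (d - h x0) <= t * (d + h x0) * (d - h x0)) by (apply Rmult_le_compat_r; lra).
    assert (((1 - t) * d + t * h x0 - r) * (d + h x0) < 0) by nra.
    nra.
Qed.

Lemma straight_homotopy_cont :
  cont_between (close_prod close_fun close_unit) close_fun
    (fun p => thickening r (fst p) /\ unit_interval (snd p)) (thickening r) straight_homotopy.
Proof.
  split.
  { intros [h t] [Hh Ht]; exact (straight_homotopy_thickening h t Hh Ht). }
  intros [h t] [Hh Ht] eps Heps; simpl in *.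
  destruct (proj2 retract_cont h Hh (eps / 3)) as [delta [Hdelta Hret]]; [lra|].
  pose proof PI_RGT_0.
  exists (Rmin delta (Rmin (eps / 3) (eps / (3 * PI)))); split.
  { apply Rmin_pos; [lra|]. apply Rmin_pos; [lra|]. apply Rdiv_lt_0_compat; lra. }
  intros [h' t'] [Hh' Ht'] [[s [Hs Hb]] Htt']; simpl in *. unfold close_unit in Htt'.
  apply Rlt_min3 in Hs as (Hs1 & Hs2 & _). apply Rlt_min3 in Htt' as (_ & _ & Htt').
  assert (HD : dS1 (retract h) (retract h') < eps / 3)
    by (apply (Hret h' Hh'); exists s; split; [exact Hs1|exact Hb]).
  exists (dS1 (retract h) (retract h') + s + Rabs (t - t') * PI); split.
  { enough (Rabs (t - t') * PI < eps / 3) by lra.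
    apply Rmult_lt_reg_r with (/ PI); [apply Rinv_0_lt_compat; lra|].
    replace (Rabs (t - t') * PI * / PI) with (Rabs (t - t')) by (field; lra).
    replace (eps / 3 * / PI) with (eps / (3 * PI)) by (field; lra). exact Htt'. }
  intro x. unfold straight_homotopy; simpl.
  eapply Rle_trans; [apply convex_comb_dist; exact Ht|].
  pose proof (kur_dist (retract h) (retract h') x); pose proof (Hb x).
  pose proof (tight_span_bounds h' x (proj1 Hh')).
  pose proof (tight_span_bounds _ x (kur_tight_span (retract h'))).
  assert (Rabs (h' x - kur (retract h') x) <= PI) by (split_Rabs_Rmin; lra).
  pose proof (Rabs_pos (t - t')). nra.
Qed.

End Retraction.

Theorem theorem3p29 (r : R) (hr0 : 0 < r) (hr : r <= PI / 3) :
  homotopy_equiv_S1 (thickening r).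
Proof.
  exists (retract r), kur, (straight_homotopy r), fst.
  split; [exact (retract_cont r hr0 hr)|].
  split; [exact (kur_cont r hr0)|].
  split; [exact (straight_homotopy_cont r hr0 hr)|].
  split; [intros h _ x; unfold straight_homotopy; simpl; ring|].
  split; [intros h _ x; unfold straight_homotopy; simpl; ring|].
  split.
  { split; [easy|]. intros p _ eps Heps; exists eps; split; [exact Heps|].
    intros p' _ [Hclose _]; exact Hclose. }
  split; [intro x; symmetry; exact (retract_kur r hr0 hr x)|reflexivity].
Qed.
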